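(* Let $N\ge1$, let $A\in\{0,1\}^{N\times N}$ be the symmetric adjacency matrix of an undirected graph (top layer) and $L\in\mathbb{R}^{N\times N}$ the symmetric Laplacian matrix of an undirected graph (bottom layer), both on $[N]=\{1,\dots,N\}$, and let $K=\mathrm{diag}(\kappa_1,\dots,\kappa_N)$ with $\kappa_i\in\{0,1\}$. Let $\mathcal{G}_{\mathfrak{T}}$ (resp. $\mathcal{G}_{\mathfrak{B}}$) be the group of $N\times N$ permutation matrices commuting with $A$ (resp. $L$), and let $\mathcal{G}$ be the group of pairs $(P_{\mathfrak{T}},P_{\mathfrak{B}})\in\mathcal{G}_{\mathfrak{T}}\times\mathcal{G}_{\mathfrak{B}}$ with $P_{\mathfrak{B}}K=KP_{\mathfrak{T}}$. The top-layer clusters are the orbits of $[N]$ under the permutations $P_{\mathfrak{T}}$, and the bottom-layer clusters are the orbits of $[N]$ under the permutations $P_{\mathfrak{B}}$, as $(P_{\mathfrak{T}},P_{\mathfrak{B}})$ ranges over $\mathcal{G}$. Let $\mathcal{K}_{\mathfrak{B}}$ be a bottom-layer cluster of size $m$. Then exactly one of the following holds: (i) the cluster receives no inter-layer connections, i.e. $\kappa_i=0$ for all $i\in\mathcal{K}_{\mathfrak{B}}$; (ii) the cluster receives one-to-one inter-layer connections from a top-layer cluster of size at least $m$, i.e. $\kappa_i=1$ for all $i\in\mathcal{K}_{\mathfrak{B}}$ and the top-layer nodes $i\in\mathcal{K}_{\mathfrak{B}}$ all belong to a single top-layer cluster $\mathcal{K}_{\mathfrak{T}}$ with $|\mathcal{K}_{\mathfrak{T}}|\ge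 m$.
   Context: The setting is a duplex network: top-layer node $i$ is connected by a directed inter-layer link to bottom-layer node $i$ exactly when $\kappa_i=1$, and there are no other inter-layer links. The dynamics is $\dot x_i=\mathfrak{t}(x_i)+\alpha\sum_j A_{ij}\mathfrak{u}(x_j)$, $\dot y_i=\mathfrak{b}(y_i)-\beta\sum_j L_{ij}\mathfrak{c}(y_j)+\sigma\kappa_i D(x_i-y_i)$, and $\mathcal{G}$ is the group of symmetries (layer-preserving node permutations) under which this system is invariant. *)

From HB Require Import structures.
From mathcomp Require Import all_boot all_order all_algebra all_fingroup.
Set Implicit Arguments. Unset Strict Implicit. Unset Printing Implicit Defensive.
Import Order.TTheory GRing.Theory Num.Theory.
Local Open Scope ring_scope.

Definition is_adjacency (R : nzRingType) (N : nat) (A : 'M[R]_N) : Prop :=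
  A^T = A /\ forall i j, A i j = 0 \/ A i j = 1.

Definition is_laplacian (R : realFieldType) (N : nat) (L : 'M[R]_N) : Prop :=
  exists W : 'M[R]_N,
    [/\ W^T = W, (forall i j, 0 <= W i j), (forall i, W i i = 0) &
        L = \matrix_(i, j) ((if i == j then \sum_k W i k else 0) - W i j)].

Definition Kmat (R : nzRingType) (N : nat) (kappa : 'I_N -> bool) : 'M[R]_N :=
  diag_mx (\row_i (kappa i)%:R).

Definition symG (R : nzRingType) (N : nat) (A L : 'M[R]_N) (kappa : 'I_N -> bool)
  : {set 'S_N * 'S_N} :=
  [set p : 'S_N * 'S_N |
    [&& perm_mx p.1 *m A == A *m perm_mx p.1,
        perm_mx p.2 *m L == L *m perm_mx p.2 &
        perm_mx p.2 *m Kmat R kappa == Kmat R kappa *m perm_mx p.1]].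

Definition top_cluster (R : nzRingType) (N : nat) (A L : 'M[R]_N)
  (kappa : 'I_N -> bool) (i : 'I_N) : {set 'I_N} :=
  [set (p.1 : 'S_N) i | p in symG A L kappa].

Definition bot_cluster (R : nzRingType) (N : nat) (A L : 'M[R]_N)
  (kappa : 'I_N -> bool) (i : 'I_N) : {set 'I_N} :=
  [set (p.2 : 'S_N) i | p in symG A L kappa].

(* Only the coupling condition P_B K = K P_T matters.  Comparing the entries (i, P_B i) and (i, P_T i) of
   both sides shows that P_B preserves kappa and that P_T and P_B agree on the
   nodes with kappa = 1.  Hence kappa is constant on every bottom cluster, and
   when it is 1 there, the bottom cluster of i lies inside the top cluster of i. *)
From HB Require Import structures.
From mathcomp Require Import all_boot all_order all_algebra all_fingroup.
Import Order.TTheory GRing.Theory Num.Theory.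
Local Open Scope ring_scope.

Section Coupling.

Context {R : nzRingType} {N : nat} (A L : 'M[R]_N) (kappa : 'I_N -> bool).

Lemma nat_of_bool_inj (b c : bool) : (b%:R : R) = c%:R -> b = c.
Proof.
by case: b; case: c => //= /eqP; rewrite ?oner_eq0 // eq_sym oner_eq0.
Qed.

Lemma perm_mx_KmatE (t : 'S_N) i j :
  (perm_mx t *m Kmat R kappa) i j = ((t i == j) && kappa j)%:R.
Proof.
rewrite -row_permE !mxE.
by case: eqP => [->|_]; rewrite ?mulr1n ?mulr0n // andbF.
Qed.

Lemma Kmat_perm_mxE (s : 'S_N) i j :
  (Kmat R kappa *m perm_mx s) i j = (kappa i && (s i == j))%:R.
Proof.
rewrite -[s]invgK -col_permE !mxE invgK eq_sym (canF_eq (permKV s)) eq_sym.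
by case: (kappa i); case: (s i == j).
Qed.

Lemma Kmat_intertwined (s t : 'S_N) (i : 'I_N) :
  perm_mx t *m Kmat R kappa = Kmat R kappa *m perm_mx s ->
  kappa (t i) = kappa i /\ (kappa i -> s i = t i).
Proof.
move=> E.
have entry j : (t i == j) && kappa j = kappa i && (s i == j).
  by apply: nat_of_bool_inj; rewrite -perm_mx_KmatE -Kmat_perm_mxE E.
move: (entry (t i)) (entry (s i)); rewrite !eqxx /=.
by case: (kappa i) => /= [-> /andP [/eqP -> _] | -> _]; rewrite ?eqxx.
Qed.

Lemma symG_intertwined (i : 'I_N) {p : 'S_N * 'S_N} :
  p \in symG A L kappa ->
  kappa (p.2 i) = kappa i /\ (kappa i -> p.1 i = p.2 i).
Proof. by rewrite inE => /and3P [_ _ /eqP]; apply: Kmat_intertwined. Qed.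

Lemma symG1 : (1%g, 1%g) \in symG A L kappa.
Proof. by rewrite inE /= !perm_mx1 !mul1mx !mulmx1 !eqxx. Qed.

Lemma bot_cluster_refl (i : 'I_N) : i \in bot_cluster A L kappa i.
Proof. by apply/imsetP; exists (1%g, 1%g); rewrite ?perm1 //; apply: symG1. Qed.

Lemma bot_cluster_kappa (i j : 'I_N) :
  j \in bot_cluster A L kappa i -> kappa j = kappa i.
Proof. by case/imsetP => p Gp ->; case: (symG_intertwined i Gp). Qed.

Lemma bot_cluster_sub_top (i : 'I_N) :
  kappa i -> bot_cluster A L kappa i \subset top_cluster A L kappa i.
Proof.
move=> ki; apply/subsetP => _ /imsetP [p Gp ->].
by apply/imsetP; exists p => //; case: (symG_intertwined i Gp) => _ ->.
Qed.

End Coupling.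

Theorem corollary1 (R : realFieldType) (N : nat) (A L : 'M[R]_N)
  (kappa : 'I_N -> bool) (i0 : 'I_N) :
  (0 < N)%N -> is_adjacency A -> is_laplacian L ->
  let KB := bot_cluster A L kappa i0 in
  let m := #|KB| in
  let case1 := forall i, i \in KB -> kappa i = false in
  let case2 := (forall i, i \in KB -> kappa i = true) /\
               exists j : 'I_N, KB \subset top_cluster A L kappa j /\
                                (m <= #|top_cluster A L kappa j|)%N in
  (case1 \/ case2) /\ ~ (case1 /\ case2).
Proof.
move=> _ _ _ KB m case1 case2.
have i0KB : i0 \in KB := bot_cluster_refl A L kappa i0.
have kappaKB i : i \in KB -> kappa i = kappa i0 := bot_cluster_kappa A L kappa i0 i.
have KB_sub : kappa i0 -> KB \subset top_cluster A L kappa i0 :=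
  bot_cluster_sub_top A L kappa i0.
split; last by case=> [K0 [K1 _]]; move: (K0 _ i0KB) (K1 _ i0KB) => ->.
case k0: (kappa i0); [right | left]; last by move=> i /kappaKB ->.
split; first by move=> i /kappaKB ->.
by exists i0; split; last apply: subset_leq_card; apply: KB_sub.
Qed.
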